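(* Let $F:\mathbb{R}^d\to\mathbb{R}^d$ be $L$-Lipschitz, $G:\mathbb{R}^d\rightrightarrows\mathbb{R}^d$ maximally monotone, the solution set of $0\in F(x)+G(x)$ nonempty, $F+G$ maximally $\rho$-cohypomonotone with $\rho>0$, and $\eta>\rho$. Let $\alpha=1-\frac\rho\eta$, $\beta_k=\frac1{k+2}$, $x^\star$ a solution, and suppose $(x_k)$ satisfies $x_{k+1}=\beta_kx_0+(1-\beta_k)((1-\alpha)x_k+\alpha\widetilde J_k)$ with $\|J_{\eta(F+G)}(x_k)-\widetilde J_k\|\le\varepsilon_k$ for some $\varepsilon_k>0$. Then for $k\ge0$, $$\|x_{k+1}-x^\star\|\le\|x_0-x^\star\|+\Big(1-\frac\rho\eta\Big)\frac1{k+2}\sum_{i=0}^k(i+1)\varepsilon_i.$$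
   Context: For an operator $A$, $J_A=(\mathrm{Id}+A)^{-1}$. $F+G$ is $\rho$-cohypomonotone if $\langle u-v,x-y\rangle\ge-\rho\|u-v\|^2$ for all $(x,u),(y,v)$ in its graph; maximal means its graph is not strictly contained in that of another $\rho$-cohypomonotone operator. *)

From mathcomp Require Import all_boot all_order all_algebra.
From mathcomp Require Import reals.
Set Implicit Arguments. Unset Strict Implicit. Unset Printing Implicit Defensive.
Import Order.TTheory GRing.Theory Num.Theory.
Local Open Scope ring_scope.

Section Defs.
Variables (R : realType) (d : nat).
Notation V := 'rV[R]_d.

Definition inner (u v : V) : R := \sum_(i < d) u 0 i * v 0 i.
Definition enorm (u : V) : R := Num.sqrt (inner u u).

(* set-valued operators, represented by their graphs: A x u  <->  u \in A(x) *)
Definition oper := V -> V -> Prop.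

Definition lipschitz (L : R) (F : V -> V) : Prop :=
  forall x y, enorm (F x - F y) <= L * enorm (x - y).

Definition monotone (A : oper) : Prop :=
  forall x u y v, A x u -> A y v -> 0 <= inner (u - v) (x - y).

Definition subgraph (A B : oper) : Prop := forall x u, A x u -> B x u.

Definition maximally_monotone (A : oper) : Prop :=
  monotone A /\ forall B, monotone B -> subgraph A B -> subgraph B A.

Definition cohypomonotone (rho : R) (A : oper) : Prop :=
  forall x u y v, A x u -> A y v ->
    - rho * enorm (u - v) ^+ 2 <= inner (u - v) (x - y).

Definition maximally_cohypomonotone (rho : R) (A : oper) : Prop :=
  cohypomonotone rho A /\
  forall B, cohypomonotone rho B -> subgraph A B -> subgraph B A.

Definition oper_add (F : V -> V) (G : oper) : oper :=
  fun x w => exists u, G x u /\ w = F x + u.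

Definition oper_scale (eta : R) (A : oper) : oper :=
  fun x w => exists u, A x u /\ w = eta *: u.

(* p \in J_A(x) = (Id + A)^{-1}(x)  <->  x \in p + A(p) *)
Definition resolvent (A : oper) (x p : V) : Prop :=
  exists u, A p u /\ x = p + u.

End Defs.

(* The relaxed resolvent (rho/eta) Id + (1 - rho/eta) J_{eta A} of a
   rho-cohypomonotone operator A with eta >= rho is quasi-nonexpansive: it moves
   no point farther from a zero of A.  Hence one Halpern step
   x_{k+1} = b_k x_0 + (1 - b_k) T~ x_k with the inexact resolvent T~ satisfies
   |x_{k+1} - x*| <= b_k |x_0 - x*| + (1 - b_k) (|x_k - x*| + alpha eps_k),
   and unrolling this recursion with b_k = 1/(k+2) gives the bound. *)

From mathcomp Require Import all_boot all_order all_algebra.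
From mathcomp Require Import reals.
From mathcomp Require Import ring lra.
Set Implicit Arguments. Unset Strict Implicit. Unset Printing Implicit Defensive.
Import Order.TTheory GRing.Theory Num.Theory.
Local Open Scope ring_scope.

Section Euclidean.
Variables (R : realType) (d : nat).
Implicit Types (u v w : 'rV[R]_d) (a t : R).

Lemma innerC u v : inner u v = inner v u.
Proof. by apply: eq_bigr => i _; rewrite mulrC. Qed.

Lemma innerDl u v w : inner (u + v) w = inner u w + inner v w.
Proof. by rewrite /inner -big_split; apply: eq_bigr => i _; rewrite mxE mulrDl. Qed.

Lemma innerZl a u v : inner (a *: u) v = a * inner u v.
Proof. by rewrite /inner mulr_sumr; apply: eq_bigr => i _; rewrite mxE mulrA. Qed.

Lemma innerNl u v : inner (- u) v = - inner u v.
Proof. by rewrite /inner -sumrN; apply: eq_bigr => i _; rewrite mxE mulNr. Qed.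

Lemma innerDr u v w : inner w (u + v) = inner w u + inner w v.
Proof. by rewrite !(innerC w) innerDl. Qed.

Lemma innerZr a u v : inner v (a *: u) = a * inner v u.
Proof. by rewrite !(innerC v) innerZl. Qed.

Lemma innerNr u v : inner v (- u) = - inner v u.
Proof. by rewrite !(innerC v) innerNl. Qed.

Definition innerE := (innerDl, innerZl, innerNl, innerDr, innerZr, innerNr).

Lemma inner_ge0 u : 0 <= inner u u.
Proof. by apply: sumr_ge0 => i _; rewrite -expr2 sqr_ge0. Qed.

Lemma inner_self_eq0 u : inner u u = 0 -> u = 0.
Proof.
move=> u0; apply/rowP => j; rewrite !mxE; apply/eqP; rewrite -sqrf_eq0 expr2.
by apply/eqP/(psumr_eq0P _ u0) => // i _; rewrite -expr2 sqr_ge0.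
Qed.

Lemma inner_sqr_le u v : inner u v ^+ 2 <= inner u u * inner v v.
Proof.
have [->|v0] := eqVneq v 0.
  by rewrite -(scale0r 0) !innerZr !mul0r expr0n mulr0.
set a := inner u u; set b := inner u v; set c := inner v v.
have c_gt0 : 0 < c by rewrite lt0r inner_ge0 andbT; apply: contra_neq v0; apply: inner_self_eq0.
(* |c u - b v|^2 = c (a c - b^2) *)
have := inner_ge0 (c *: u - b *: v).
rewrite !innerE -/a -/c (innerC v u) -/b => H.
have : 0 <= c * (a * c - b ^+ 2) by nra.
by rewrite pmulr_rge0 // subr_ge0 mulrC.
Qed.

Lemma enorm_ge0 u : 0 <= enorm u.
Proof. exact: sqrtr_ge0. Qed.

Lemma enorm_sqr u : enorm u ^+ 2 = inner u u.
Proof. by rewrite sqr_sqrtr // inner_ge0. Qed.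

Lemma inner_le_enorm u v : inner u v <= enorm u * enorm v.
Proof.
rewrite /enorm -sqrtrM ?inner_ge0 //; apply: le_trans (ler_norm _) _.
by rewrite -sqrtr_sqr ler_sqrt ?inner_sqr_le // mulr_ge0 // inner_ge0.
Qed.

Lemma enormZ a u : enorm (a *: u) = `|a| * enorm u.
Proof.
by rewrite /enorm innerZl innerZr mulrA -expr2 sqrtrM ?sqr_ge0 // sqrtr_sqr.
Qed.

Lemma enormN u : enorm (- u) = enorm u.
Proof. by rewrite /enorm innerNl innerNr opprK. Qed.

Lemma enormD u v : enorm (u + v) <= enorm u + enorm v.
Proof.
rewrite -(ler_pXn2r (n := 2)) ?nnegrE ?addr_ge0 ?enorm_ge0 //.
rewrite sqrrD !enorm_sqr !innerE (innerC v u).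
have := inner_le_enorm u v; lra.
Qed.

Lemma enorm_convex_le t u v : 0 <= t <= 1 ->
  enorm (t *: u + (1 - t) *: v) <= t * enorm u + (1 - t) * enorm v.
Proof.
move=> /andP[t0 t1]; apply: le_trans (enormD _ _) _.
by rewrite !enormZ !ger0_norm ?subr_ge0.
Qed.

End Euclidean.

Section Cohypomonotone.
Variables (R : realType) (d : nat) (A : oper R d) (rho eta : R).
Hypotheses (A_cohypo : cohypomonotone rho A) (rho_le_eta : rho <= eta).

Lemma cohypomonotone_step_le p u z : A p u -> A z 0 ->
  enorm (p - z + rho *: u) <= enorm (p - z + eta *: u).
Proof.
move=> Apu Az0; rewrite /enorm ler_sqrt ?inner_ge0 // !innerE.
have := A_cohypo Apu Az0; rewrite subr0 enorm_sqr.
rewrite !innerE !(innerC u).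
have := inner_ge0 u.
set a := inner u u; set b := inner p u; set c := inner z u => a0 H.
(* the difference of the squared norms is 2 (eta - rho) (b - c + rho a) + (eta - rho)^2 a *)
have h1 : 0 <= (eta - rho) * (b - c + rho * a) by rewrite mulr_ge0 ?subr_ge0 //; lra.
have h2 : 0 <= (eta - rho) ^+ 2 * a by rewrite mulr_ge0 ?sqr_ge0.
nra.
Qed.

Lemma relaxed_resolvent_le x p z : 0 < eta -> A z 0 ->
  resolvent (oper_scale eta A) x p ->
  enorm ((rho / eta) *: x + (1 - rho / eta) *: p - z) <= enorm (x - z).
Proof.
move=> eta_gt0 Az0 [_ [[u [Apu ->]] ->]].
have eta_neq0 : eta != 0 by rewrite gt_eqF.
have -> : (rho / eta) *: (p + eta *: u) + (1 - rho / eta) *: p - z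
          = p - z + rho *: u.
  by apply/rowP => i; rewrite !mxE; field.
have -> : p + eta *: u - z = p - z + eta *: u by rewrite addrAC.
exact: cohypomonotone_step_le.
Qed.

End Cohypomonotone.

Lemma halpern_recursion_bound (R : realType) (D a : R) (e eps : nat -> R) :
  e 0 <= D ->
  (forall k, e k.+1 <= (k.+2%:R)^-1 * D + (1 - (k.+2%:R)^-1) * (e k + a * eps k)) ->
  forall k, e k <= D + a * (k.+1%:R)^-1 * \sum_(i < k) (i.+1%:R * eps i).
Proof.
move=> e0 e_step; elim=> [|k IH]; first by rewrite big_ord0 mulr0 addr0.
apply: le_trans (e_step k) _.
have b_le1 : (k.+2%:R : R)^-1 <= 1 by rewrite invf_le1 ?ltr0n // ler1n.
apply: le_trans (_ : _ <= (k.+2%:R)^-1 * D + (1 - (k.+2%:R)^-1) *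
   (D + a * (k.+1%:R)^-1 * \sum_(i < k) (i.+1%:R * eps i) + a * eps k)) _.
  by rewrite lerD2l ler_wpM2l ?subr_ge0 // lerD2r.
rewrite big_ord_recr /= -[k.+2%:R]natr1.
have n0 : (k.+1%:R : R) != 0 by rewrite pnatr_eq0.
have n1 : (k.+1%:R + 1 : R) != 0 by rewrite natr1 pnatr_eq0.
move: (k.+1%:R : R) n0 n1 (\sum_(i < k) _) => n n0 n1 s.
by rewrite le_eqVlt; apply/orP; left; apply/eqP; field; rewrite n0 n1.
Qed.

Theorem lemmaA2 (R : realType) (d : nat) (F : 'rV[R]_d -> 'rV[R]_d)
  (G : oper R d) (L rho eta : R) (x Jt : nat -> 'rV[R]_d) (eps : nat -> R)
  (xstar : 'rV[R]_d) :
  lipschitz L F ->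
  maximally_monotone G ->
  (exists z, oper_add F G z 0) ->
  maximally_cohypomonotone rho (oper_add F G) ->
  0 < rho -> rho < eta ->
  oper_add F G xstar 0 ->
  (forall k : nat,
     x k.+1 = (k.+2%:R)^-1 *: x 0
              + (1 - (k.+2%:R)^-1) *:
                  ((1 - (1 - rho / eta)) *: x k + (1 - rho / eta) *: Jt k)) ->
  (forall k : nat, 0 < eps k /\
     exists p, resolvent (oper_scale eta (oper_add F G)) (x k) p /\
               enorm (p - Jt k) <= eps k) ->
  forall k : nat,
    enorm (x k.+1 - xstar) <=
      enorm (x 0 - xstar)
      + (1 - rho / eta) * (k.+2%:R)^-1 * \sum_(i < k.+1) (i.+1%:R * eps i).
Proof.
move=> _ _ _ [cohypo _] rho_gt0 rho_lt_eta zero_xstar x_step J_err k.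
set al := 1 - rho / eta.
have eta_gt0 : 0 < eta by lra.
have al_ge0 : 0 <= al by rewrite subr_ge0 ler_pdivrMr // mul1r ltW.
apply: (halpern_recursion_bound (e := fun k => enorm (x k - xstar))) => // {}k.
have [_ [p [res_p p_err]]] := J_err k.
set b := (k.+2%:R)^-1 : R.
have b01 : 0 <= b <= 1 by rewrite invr_ge0 ler0n invf_le1 ?ltr0n ?ler1n.
set T := (rho / eta) *: x k + al *: p.
have -> : x k.+1 - xstar = b *: (x 0 - xstar) + (1 - b) *: (T - xstar + al *: (Jt k - p)).
  rewrite x_step subKr -/b -/al; apply/rowP => i; rewrite !mxE; ring.
apply: le_trans (enorm_convex_le _ _ b01) _.
rewrite lerD2l ler_wpM2l ?subr_ge0 ?(andP b01).2 //.
apply: le_trans (enormD _ _) _; apply: lerD.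
  exact: (relaxed_resolvent_le cohypo (ltW rho_lt_eta) eta_gt0 zero_xstar res_p).
by rewrite enormZ ger0_norm // -opprB enormN ler_wpM2l.
Qed.
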